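(* For all positive integers $n$ and $k$, \[ |\mathrm{Hom}^1(P_n,P_k)| = \sum_{j\in\mathbb Z}\left(\binom{n-1}{\lceil (n-1)/2\rceil - j(k+1)} - \binom{n-1}{\lfloor (n+k)/2\rfloor - j(k+1)}\right). \]
   Context: For a positive integer $m$, $P_m$ denotes the path with vertex set $[m]=\{1,\dots,m\}$ in which $i$ and $j$ are adjacent iff $|i-j|=1$; $\mathrm{Hom}(P_n,P_k)$ is the set of maps $f:[n]\to[k]$ with $|f(i)-f(i+1)|=1$ for $1\le i\le n-1$, and $\mathrm{Hom}^1(P_n,P_k)=\{f\in\mathrm{Hom}(P_n,P_k): f(1)=1\}$. Convention: $\binom{a}{b}=0$ if $b<0$ or $b>a$. *)

From HB Require Import structures.
From mathcomp Require Import all_boot all_order all_algebra.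
Set Implicit Arguments. Unset Strict Implicit. Unset Printing Implicit Defensive.
Import Order.TTheory GRing.Theory Num.Theory.

(* Vertex set [m] = {1,...,m} of P_m is encoded by 'I_m : the ordinal v
   stands for the vertex v+1.  Adjacency |i - j| = 1 is invariant under
   this shift. *)
Definition adjP (a b : nat) : bool := (a == b.+1) || (b == a.+1).

Definition Hom1 (n k : nat) : {set {ffun 'I_n -> 'I_k}} :=
  [set f : {ffun 'I_n -> 'I_k} |
     [forall i : 'I_n, forall j : 'I_n,
        (val j == (val i).+1) ==> adjP (f i) (f j)]
     && [forall i : 'I_n, (val i == 0) ==> (val (f i) == 0)]].

(* binomial coefficient binom(a, b) for b an integer, with the convention
   binom(a,b) = 0 if b < 0 or b > a (the latter is built into 'C). *)
Definition binZ (a : nat) (b : int) : int :=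
  match b with
  | Posz m => ('C(a, m))%:Z
  | Negz _ => 0%R
  end.

Definition hom_term (n k : nat) (j : int) : int :=
  (binZ n.-1 ((uphalf n.-1)%:Z - j * (k.+1)%:Z)
   - binZ n.-1 (((n + k)./2)%:Z - j * (k.+1)%:Z))%R.

Definition sym_sum (N : nat) (F : int -> int) : int :=
  (\sum_(i < (N.*2).+1) F (i%:Z - N%:Z))%R.

From HB Require Import structures.
From mathcomp Require Import all_boot all_order all_algebra.
From mathcomp Require Import zify ring.
Set Implicit Arguments. Unset Strict Implicit. Unset Printing Implicit Defensive.
Import Order.TTheory GRing.Theory Num.Theory.

(* A map in Hom^1(P_n, P_k) is a +-1 walk of length n - 1 from the bottom
   vertex of the strip [0, k) that never leaves the strip.

   - Combinatorics: let [ends_at k m y] be the maps on [m+1] ending at y.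
     Deleting the last vertex gives the recursion
       #ends_at(m+1, y) = sum of #ends_at(m, y') over neighbours y' of y.
   - Reflection principle: with [walks m x] the number of free walks on Z
     from 0 to x, the signed sum [strip_count] of walks over the images of y
     under the reflections about the walls -1 and k satisfies the same
     recursion, vanishes on both walls and has the right initial values;
     hence it equals #ends_at (as long as the window of images is wider
     than the walk length).
   - Summing over the endpoints telescopes to differences of consecutive
     pairs [walks m x + walks m (x+1)], which are binomial coefficients;
     these are exactly the two binomials in each summand of the theorem. *)

Lemma Hom1P (n k : nat) (f : {ffun 'I_n -> 'I_k}) :
  f \in Hom1 n k <->
  (forall i j : 'I_n, j = i.+1 :> nat -> adjP (f i) (f j))
  /\ (forall i : 'I_n, i = 0 :> nat -> f i = 0 :> nat).
Proof.
rewrite inE; split.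
  case/andP=> /forallP adj_f /forallP start_f; split.
    by move=> i j ij; apply: (implyP (forallP (adj_f i) j)); apply/eqP.
  by move=> i i0; apply/eqP; apply: (implyP (start_f i)); apply/eqP.
case=> adj_f start_f; apply/andP; split; apply/forallP => i.
  by apply/forallP => j; apply/implyP => /eqP; apply: adj_f.
by apply/implyP => /eqP /start_f /eqP.
Qed.

Lemma card_by_fibres (T : finType) (k : nat) (B : {set T}) (p : T -> 'I_k) :
  #|B| = \sum_(y < k) #|[set x in B | p x == y :> nat]|.
Proof.
rewrite -sum1_card (partition_big p predT) //; apply: eq_bigr => y _.
by rewrite -sum1_card; apply: eq_bigl => x; rewrite !inE val_eqE.
Qed.

Section Extension.

Variables (m k : nat).

Definition restrict (f : {ffun 'I_m.+2 -> 'I_k}) : {ffun 'I_m.+1 -> 'I_k} :=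
  [ffun i => f (lift ord_max i)].

Definition extend (g : {ffun 'I_m.+1 -> 'I_k}) (y : 'I_k) : {ffun 'I_m.+2 -> 'I_k} :=
  [ffun i => if unlift ord_max i is Some j then g j else y].

Lemma restrict_extend (g : {ffun 'I_m.+1 -> 'I_k}) (y : 'I_k) :
  restrict (extend g y) = g.
Proof. by apply/ffunP => i; rewrite !ffunE liftK. Qed.

Lemma extend_last (g : {ffun 'I_m.+1 -> 'I_k}) (y : 'I_k) : extend g y ord_max = y.
Proof. by rewrite ffunE unlift_none. Qed.

Lemma extend_restrict (f : {ffun 'I_m.+2 -> 'I_k}) :
  extend (restrict f) (f ord_max) = f.
Proof.
apply/ffunP => i; rewrite !ffunE.
by case: unliftP => [j -> | ->]; rewrite ?ffunE.
Qed.

Lemma restrict_Hom1 (f : {ffun 'I_m.+2 -> 'I_k}) :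
  f \in Hom1 m.+2 k -> restrict f \in Hom1 m.+1 k.
Proof.
case/Hom1P=> adj_f start_f; apply/Hom1P; split=> [i j ij | i i0]; rewrite !ffunE.
  by apply: adj_f; rewrite !lift_max.
by apply: start_f; rewrite lift_max.
Qed.

Lemma Hom1_last_adj (f : {ffun 'I_m.+2 -> 'I_k}) :
  f \in Hom1 m.+2 k -> adjP (restrict f ord_max) (f ord_max).
Proof. by case/Hom1P=> adj_f _; rewrite ffunE; apply: adj_f; rewrite lift_max. Qed.

Lemma extend_Hom1 (g : {ffun 'I_m.+1 -> 'I_k}) (y : 'I_k) :
  g \in Hom1 m.+1 k -> adjP (g ord_max) y -> extend g y \in Hom1 m.+2 k.
Proof.
case/Hom1P=> adj_g start_g adj_y; apply/Hom1P; split=> [i j ij | i i0]; rewrite !ffunE.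
  case: (unliftP ord_max i) ij => [i' -> | ->] ij; last first.
    by move: (ltn_ord j); rewrite ij ltnn.
  case: (unliftP ord_max j) ij => [j' -> | ->]; rewrite !lift_max => ij.
    exact: adj_g.
  by have -> : i' = ord_max by apply: val_inj; case: ij.
case: (unliftP ord_max i) i0 => [i' -> | -> //].
by rewrite lift_max; apply: start_g.
Qed.

End Extension.

Definition ends_at (k m y : nat) : {set {ffun 'I_m.+1 -> 'I_k}} :=
  [set f in Hom1 m.+1 k | f ord_max == y :> nat].

Lemma Hom1_one (k : nat) (f : {ffun 'I_1 -> 'I_k}) :
  (f \in Hom1 1 k) = (f ord_max == 0 :> nat).
Proof.
apply/idP/eqP => [/Hom1P [_ start_f] | f0]; first exact: start_f.
apply/Hom1P; split=> [i j ij | i _]; first by move: (ltn_ord j); rewrite ij.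
by rewrite (ord1 i) -(ord1 ord_max).
Qed.

Lemma card_ends_at0 (k y : nat) : y < k -> #|ends_at k 0 y| = (y == 0).
Proof.
case: y => [|y] lt_yk.
  rewrite (_ : ends_at k 0 0 = [set [ffun => Ordinal lt_yk]]) ?cards1 //.
  apply/setP => f; rewrite inE Hom1_one in_set1 andbb.
  apply/eqP/eqP => [f0 | ->]; last by rewrite ffunE.
  by apply/ffunP => i; rewrite ffunE (ord1 i) -(ord1 ord_max); apply: val_inj.
apply/eqP; rewrite cards_eq0; apply/eqP/setP => f; rewrite inE Hom1_one in_set0.
by case: eqP => // ->.
Qed.

(* Removing the last vertex is a bijection onto the maps whose last value
   is adjacent to y. *)
Lemma card_ends_at_succ (k m : nat) (y : 'I_k) :
  #|ends_at k m.+1 y| = #|[set g in Hom1 m.+1 k | adjP (g ord_max) y]|.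
Proof.
have last_y (f : {ffun 'I_m.+2 -> 'I_k}) : f \in ends_at k m.+1 y -> f ord_max = y.
  by rewrite inE => /andP[_ /eqP fy]; apply: val_inj.
have restrict_inj : {in ends_at k m.+1 y &, injective (@restrict m k)}.
  move=> f1 f2 /last_y f1y /last_y f2y e.
  by rewrite -(extend_restrict f1) -(extend_restrict f2) e f1y f2y.
rewrite -(card_in_imset restrict_inj); apply: eq_card => g.
rewrite [RHS]inE; apply/imsetP/andP => [[f ends_f ->] | [Hom_g adj_g]].
  rewrite -(last_y _ ends_f); move: ends_f; rewrite inE => /andP[Hom_f _].
  by rewrite restrict_Hom1 // Hom1_last_adj.
exists (extend g y); last by rewrite restrict_extend.
by rewrite inE extend_Hom1 // extend_last /=.
Qed.

Lemma card_ends_at_rec (k m : nat) (y : 'I_k) :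
  #|ends_at k m.+1 y| = \sum_(y' < k | adjP y' y) #|ends_at k m y'|.
Proof.
rewrite card_ends_at_succ [RHS]big_mkcond.
rewrite (card_by_fibres _ (fun g : {ffun 'I_m.+1 -> 'I_k} => g ord_max)).
apply: eq_bigr => y' _; case: ifP => adj_y'y.
  apply: eq_card => g; rewrite !inE.
  by case: eqP => [-> | _]; rewrite ?adj_y'y ?andbT ?andbF.
apply: eq_card0 => g; rewrite !inE.
by case: eqP => [-> | _]; rewrite ?adj_y'y ?andbF.
Qed.

Local Open Scope ring_scope.

Fixpoint walks (m : nat) (x : int) : int :=
  if m is m'.+1 then walks m' (x - 1) + walks m' (x + 1) else (x == 0)%:R.

Lemma walks_sym (m : nat) (x : int) : walks m (- x) = walks m x.
Proof.
elim: m x => [|m IH] x /=; first by rewrite oppr_eq0.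
have -> : - x - 1 = - (x + 1) by ring.
have -> : - x + 1 = - (x - 1) by ring.
by rewrite !IH addrC.
Qed.

Lemma walks_far (m : nat) (x : int) :
  m%:Z < x \/ x < - m%:Z -> walks m x = 0.
Proof.
elim: m x => [|m IH] x /= far.
  by have /negbTE -> : x != 0 by lia.
by rewrite !IH ?addr0 //; lia.
Qed.

Lemma binZ_pascal (m : nat) (c : int) :
  binZ m.+1 c = binZ m (c - 1) + binZ m c.
Proof.
case: c => [[|c]|c]; first by rewrite /= !bin0.
  have -> : Posz c.+1 - 1 = Posz c by lia.
  by rewrite /= binS PoszD addrC.
by have -> : Negz c - 1 = Negz c.+1 by lia.
Qed.

Definition walk_pair (m : nat) (x : int) : int := walks m x + walks m (x + 1).

(* Exactly one of x, x + 1 has the parity of m, so a pair counts the walks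
   with c up-steps for c = ceil((m + x) / 2), that is binom(m, c). *)
Lemma walk_pair_binZ (m : nat) (x c : int) :
  2 * c = m%:Z + x \/ 2 * c = m%:Z + x + 1 -> walk_pair m x = binZ m c.
Proof.
rewrite /walk_pair; elim: m x c => [|m IH] x c /= hc.
  move: hc; have [-> | c0] := eqVneq c 0 => hc.
    by have [-> | ->] : x = 0 \/ x = -1 by lia.
  have /negbTE -> : x != 0 by lia.
  have /negbTE -> : x + 1 != 0 by lia.
  by case: c c0 {hc} => [[|c]|c].
rewrite binZ_pascal -(IH (x - 1)) -?(IH (x + 1)); try lia.
by rewrite subrK addrK; ring.
Qed.

Lemma eq_sym_sum (N : nat) (F G : int -> int) :
  (forall j, F j = G j) -> sym_sum N F = sym_sum N G.
Proof. by move=> FG; apply: eq_bigr. Qed.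

Lemma sym_sumB (N : nat) (F G : int -> int) :
  sym_sum N (fun j => F j - G j) = sym_sum N F - sym_sum N G.
Proof. exact: sumrB. Qed.

Lemma sym_sum_opp (N : nat) (F : int -> int) :
  sym_sum N F = sym_sum N (fun j => F (- j)).
Proof.
rewrite /sym_sum (reindex_inj rev_ord_inj); apply: eq_bigr => i _ /=.
have := ltn_ord i; rewrite subSS; move: (nat_of_ord i) => {}i lt_i_2N.
by congr F; rewrite -muln2 in lt_i_2N *; lia.
Qed.

Lemma sym_sum_shift (N : nat) (F : int -> int) :
  sym_sum N (fun j => F (j + 1)) = sym_sum N F - F (- N%:Z) + F (N%:Z + 1).
Proof.
rewrite /sym_sum big_ord_recr big_ord_recl /= sub0r [F (- _) + _]addrC addrK.
have -> : N.*2%:Z - N%:Z + 1 = N%:Z + 1 by rewrite -muln2; lia.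
by congr (_ + _); apply: eq_bigr => i _; congr F; rewrite /bump /=; lia.
Qed.

(* Reflection principle for the strip [0, k): the walks of length m from 0
   to y, signed over the images of y under the reflections about -1 and k
   (images y + 2j(k+1) and -2 - y + 2j(k+1), |j| <= N). *)
Definition strip_count (k N m : nat) (y : int) : int :=
  sym_sum N (fun j => walks m (y - 2 * j * (k.+1)%:Z)
                      - walks m (y + 2 - 2 * j * (k.+1)%:Z)).

Section StripCount.

Variables (k N : nat).

Lemma strip_count_rec (m : nat) (y : int) :
  strip_count k N m.+1 y = strip_count k N m (y - 1) + strip_count k N m (y + 1).
Proof.
rewrite /strip_count /sym_sum -big_split; apply: eq_bigr => i _ /=.
set c := 2 * _ * _.
have -> : y - c - 1 = y - 1 - c by ring.
have -> : y - c + 1 = y + 1 - c by ring.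
have -> : y + 2 - c - 1 = y - 1 + 2 - c by ring.
have -> : y + 2 - c + 1 = y + 1 + 2 - c by ring.
ring.
Qed.

Lemma strip_count_lower_wall (m : nat) : strip_count k N m (-1) = 0.
Proof.
rewrite /strip_count sym_sumB [X in _ - X]sym_sum_opp.
rewrite [X in _ - X](@eq_sym_sum _ _ (fun j => walks m (-1 - 2 * j * (k.+1)%:Z))).
  by rewrite subrr.
by move=> j; rewrite -walks_sym; congr walks; ring.
Qed.

(* Antisymmetry about the upper wall k; the window must be wide enough for
   the boundary images to be out of reach of walks of length m. *)
Lemma strip_count_upper_wall (m : nat) : (m < N)%N -> strip_count k N m k = 0.
Proof.
move=> ltmN; rewrite /strip_count sym_sumB [X in _ - X]sym_sum_opp.
set h := fun j => walks m (k%:Z - 2 * j * (k.+1)%:Z).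
rewrite [X in _ - X](@eq_sym_sum _ _ (fun j => h (j + 1))); last first.
  by move=> j; rewrite /h -walks_sym; congr walks; ring.
rewrite sym_sum_shift.
have -> : h (- N%:Z) = 0 by apply: walks_far; nia.
have -> : h (N%:Z + 1) = 0 by apply: walks_far; nia.
by rewrite subr0 addr0 subrr.
Qed.

(* Initially only the image j = 0 of the origin contributes. *)
Lemma strip_count_init (y : int) :
  0 <= y -> y < k%:Z -> strip_count k N 0 y = (y == 0)%:R.
Proof.
move=> y_ge0 y_ltk; have mid : (N < N.*2.+1)%N by rewrite ltnS -addnn leq_addr.
rewrite /strip_count /sym_sum (bigD1 (Ordinal mid)) //= big1.
  rewrite subrr mulr0 mul0r !subr0.
  have /negbTE -> : y + 2 != 0 by lia.
  by rewrite subr0.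
move=> i ne_iN.
have j_ne0 : 1 <= i%:Z - N%:Z \/ i%:Z - N%:Z <= -1.
  suff : (i : nat) != N by lia.
  by apply: contraNneq ne_iN => eq_iN; apply/eqP/val_inj.
have /negbTE -> : y - 2 * (i%:Z - N%:Z) * (k.+1)%:Z != 0 by case: j_ne0; nia.
by have /negbTE -> : y + 2 - 2 * (i%:Z - N%:Z) * (k.+1)%:Z != 0 by case: j_ne0; nia.
Qed.

End StripCount.

Lemma telescope2 (g : int -> int) (k : nat) :
  \sum_(y < k) (g y%:Z - g (y%:Z + 2)) = (g 0 + g 1) - (g k%:Z + g (k%:Z + 1)).
Proof.
elim: k => [|k IH]; first by rewrite big_ord0 subrr.
rewrite big_ord_recr /= IH.
have -> : k%:Z + 2 = k.+1%:Z + 1 by lia.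
have -> : k%:Z + 1 = k.+1%:Z by lia.
ring.
Qed.

Lemma sum_strip_count (k N m : nat) :
  \sum_(y < k) strip_count k N m y%:Z =
  sym_sum N (fun j => walk_pair m (- (2 * j * (k.+1)%:Z))
                      - walk_pair m (k%:Z - 2 * j * (k.+1)%:Z)).
Proof.
rewrite /strip_count /sym_sum exchange_big /=; apply: eq_bigr => i _.
set c := 2 * _ * _.
rewrite (telescope2 (fun z => walks m (z - c))) /walk_pair /=.
have -> : k%:Z + 1 - c = k%:Z - c + 1 by ring.
have -> : 1 - c = - c + 1 by ring.
by rewrite sub0r.
Qed.

Lemma hom_term_walk_pairs (m k : nat) (j : int) :
  hom_term m.+1 k j = walk_pair m (- (2 * j * (k.+1)%:Z))
                      - walk_pair m (k%:Z - 2 * j * (k.+1)%:Z).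
Proof.
rewrite /hom_term /= (@walk_pair_binZ _ _ ((uphalf m)%:Z - j * (k.+1)%:Z)).
  rewrite (@walk_pair_binZ _ _ ((uphalf (m + k))%:Z - j * (k.+1)%:Z)) //.
  have := odd_double_half (m + k); rewrite uphalf_half -muln2.
  by case: (odd _) => /= ?; lia.
have := odd_double_half m; rewrite uphalf_half -muln2.
by case: (odd _) => /= ?; lia.
Qed.

Lemma sum_over_neighbours (G : nat -> int) (y k : nat) : (y < k)%N ->
  \sum_(y' < k | adjP y' y) G y'
  = (if y is z.+1 then G z else 0) + (if (y.+1 < k)%N then G y.+1 else 0).
Proof.
move=> lt_yk; rewrite big_mkcond.
have split_adj (y' : nat) : (if adjP y' y then G y' else 0)
    = (if y' == y.+1 then G y' else 0) + (if y'.+1 == y then G y' else 0).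
  rewrite /adjP; case: (y' =P y.+1) => [-> | _]; last by rewrite add0r eq_sym.
  have /negbTE -> : y.+2 != y by lia.
  by rewrite addr0.
under eq_bigr do rewrite split_adj.
rewrite big_split -!big_mkcond /= big_ord1_eq addrC.
congr (_ + _); case: y lt_yk {split_adj} => [|z] lt_zk.
  by rewrite big_pred0.
by under eq_bigl do rewrite eqSS; rewrite big_ord1_eq ltnW.
Qed.

Lemma card_ends_at_strip (k N m y : nat) : (m < N)%N -> (y < k)%N ->
  #|ends_at k m y|%:Z = strip_count k N m y%:Z.
Proof.
elim: m y => [|m IH] y lt_mN lt_yk.
  by rewrite card_ends_at0 // strip_count_init //; case: y {lt_yk}.
rewrite (@card_ends_at_rec k m (Ordinal lt_yk)) /= -natz natr_sum.
under eq_bigr do rewrite natz (IH _ (ltnW lt_mN) (ltn_ord _)).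
rewrite (sum_over_neighbours (fun y => strip_count k N m y%:Z)) // strip_count_rec.
congr (_ + _).
  case: y lt_yk => [|z] _; first by rewrite strip_count_lower_wall.
  by congr strip_count; lia.
case: ltnP => lt_Syk; first by congr strip_count; lia.
have -> : y%:Z + 1 = k%:Z by lia.
by rewrite strip_count_upper_wall // ltnW.
Qed.

Local Close Scope ring_scope.

Theorem mainTheorem4 (n k : nat) (hn : 0 < n) (hk : 0 < k) (N : nat) (hN : n <= N) :
  Posz #|Hom1 n k| = sym_sum N (hom_term n k).
Proof.
case: n hn hN => [//|m] _ lt_mN.
rewrite (card_by_fibres _ (fun f : {ffun 'I_m.+1 -> 'I_k} => f ord_max)).
rewrite -natz natr_sum.
under eq_bigr do rewrite natz (card_ends_at_strip lt_mN (ltn_ord _)).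
rewrite sum_strip_count; apply: eq_bigr => j _.
by rewrite hom_term_walk_pairs.
Qed.
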